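(* Let $m\in\mathbb N$, $M\in{\rm Mat}_m(\mathbb Z)$, and $n_1,n_2\in\mathbb N$ with $\gcd(n_1,n_2)=1$. Then $\Gamma_{M,\,n_1n_2}$ is isomorphic (as a directed graph) to the tensor product $\Gamma_{M,\,n_1}\times\Gamma_{M,\,n_2}$.
   Context: $\mathbb N$ is the set of positive integers and $\mathbb Z_n$ the integers modulo $n$. For $M\in{\rm Mat}_m(\mathbb Z)$, the move graph $\Gamma_{M,\,n}$ is the directed graph with vertex set $\mathbb Z_n^m$ and arc set $\{({\bf x},{\bf y}) : {\bf y}^T=M{\bf x}^T \text{ in } \mathbb Z_n^m\}$ (loops allowed). The tensor product $\Delta_1\times\Delta_2$ of directed graphs is the directed graph whose adjacency matrix is the Kronecker product of the adjacency matrices of $\Delta_1$ and $\Delta_2$; equivalently, its vertex set is $V(\Delta_1)\times V(\Delta_2)$ and $((u_1,u_2),(w_1,w_2))$ is an arc iff $(u_1,w_1)$ is an arc of $\Delta_1$ and $(u_2,w_2)$ is an arc of $\Delta_2$. *)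

From mathcomp Require Import all_boot all_order all_algebra.
Set Implicit Arguments. Unset Strict Implicit. Unset Printing Implicit Defensive.
Import GRing.Theory Num.Theory.
Local Open Scope ring_scope.

(* A directed graph (loops allowed) on a finite vertex type: an arc relation. *)

(* Vertices of Gamma_{M,n}: vectors in Z_n^m, represented as finite functions
   'I_m -> 'I_n (residues 0..n-1), valid for every n >= 1. *)
Definition zvec (m n : nat) := {ffun 'I_m -> 'I_n}.

(* Arc (x,y) of the move graph Gamma_{M,n}: y^T = M x^T in Z_n^m, i.e. for each
   coordinate i, y_i is the residue of sum_j M_ij x_j modulo n. *)
Definition move_arc (m n : nat) (M : 'M[int]_m) : rel (zvec m n) :=
  fun x y => [forall i : 'I_m,
    (Posz (y i : nat) == ((\sum_(j < m) M i j * Posz (x j : nat)) %% Posz n)%Z)].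

Definition tensor_arc (T1 T2 : finType) (e1 : rel T1) (e2 : rel T2)
  : rel (T1 * T2) :=
  fun u w => e1 u.1 w.1 && e2 u.2 w.2.

Definition digraph_iso (T1 T2 : finType) (e1 : rel T1) (e2 : rel T2) : Prop :=
  exists f : T1 -> T2, bijective f /\ forall x y, e1 x y = e2 (f x) (f y).

(* Reducing a vector of Z_(n1 n2)^m coordinatewise modulo n1 and modulo n2 is a
   bijection onto Z_n1^m * Z_n2^m by the Chinese remainder theorem. Reduction
   commutes with x |-> M x, and a congruence holds modulo n1 n2 iff it holds
   modulo n1 and modulo n2, so arcs correspond to pairs of arcs. *)
From mathcomp Require Import all_boot all_order all_algebra.

Set Implicit Arguments. Unset Strict Implicit. Unset Printing Implicit Defensive.
Import GRing.Theory Num.Theory.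

Local Open Scope ring_scope.

Lemma modz_sum_mulr (m : nat) (a b c : 'I_m -> int) (d : int) :
  (forall j, (b j = c j %[mod d])%Z) ->
  (\sum_(j < m) a j * b j = \sum_(j < m) a j * c j %[mod d])%Z.
Proof.
move=> bc; elim/big_rec2: _ => // j u v _ uv.
by rewrite -modzDm uv -modzMmr bc modzMmr modzDm.
Qed.

Lemma move_arcE (m n : nat) (M : 'M[int]_m) (x y : zvec m n) : (0 < n)%N ->
  move_arc M x y =
  [forall i, (Posz (y i) == \sum_(j < m) M i j * Posz (x j) %[mod n])%Z].
Proof.
move=> n_gt0; apply: eq_forallb => i.
by rewrite (@modz_small (y i)) // ltz_nat ltn_ord andbT.
Qed.

(* Reduction modulo [k.+1]: stating the modulus as a successor makes [inord] exact. *)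
Definition zvec_red (k m n : nat) (x : zvec m n) : zvec m k.+1 :=
  [ffun i => inord (x i %% k.+1)].

Lemma zvec_redE (k m n : nat) (x : zvec m n) i :
  (zvec_red k x i : nat) = (x i %% k.+1)%N.
Proof. by rewrite ffunE inordK // ltn_pmod. Qed.

Lemma zvec_red_modz (k m n : nat) (x : zvec m n) i :
  (Posz (zvec_red k x i) = Posz (x i) %[mod k.+1])%Z.
Proof. by rewrite zvec_redE -modz_nat modz_mod. Qed.

Lemma move_arc_red (k m n : nat) (M : 'M[int]_m) (x y : zvec m n) :
  move_arc M (zvec_red k x) (zvec_red k y) =
  [forall i, (Posz (y i) == \sum_(j < m) M i j * Posz (x j) %[mod k.+1])%Z].
Proof.
rewrite move_arcE //; apply: eq_forallb => i.
by rewrite zvec_red_modz (modz_sum_mulr _ (zvec_red_modz k x)).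
Qed.

Lemma zvec_red_pair_bij (m k1 k2 : nat) : coprime k1.+1 k2.+1 ->
  bijective (fun x : zvec m (k1.+1 * k2.+1) => (zvec_red k1 x, zvec_red k2 x)).
Proof.
move=> co; apply: inj_card_bij; last first.
  by rewrite card_prod !card_ffun !card_ord expnMn.
move=> x y [/ffunP red1 /ffunP red2]; apply/ffunP => i; apply/val_inj/eqP => /=.
have xy1 : x i = y i %[mod k1.+1] by rewrite -!zvec_redE red1.
have xy2 : x i = y i %[mod k2.+1] by rewrite -!zvec_redE red2.
rewrite -(modn_small (ltn_ord (x i))) -(modn_small (ltn_ord (y i))).
by rewrite chinese_remainder // xy1 xy2 !eqxx.
Qed.

Theorem theorem3p4 (m : nat) (M : 'M[int]_m) (n1 n2 : nat) :
  (0 < m)%N -> (0 < n1)%N -> (0 < n2)%N -> coprime n1 n2 ->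
  digraph_iso (@move_arc m (n1 * n2)%N M)
              (tensor_arc (@move_arc m n1 M) (@move_arc m n2 M)).
Proof.
move=> _; case: n1 => // k1 _; case: n2 => // k2 _ co.
exists (fun x => (zvec_red k1 x, zvec_red k2 x)).
split; first exact: zvec_red_pair_bij.
have coz : coprimez k1.+1 k2.+1 by rewrite coprimezE.
move=> x y; rewrite /tensor_arc /= !move_arc_red move_arcE ?muln_gt0 //.
apply/forallP/andP => [arc | [/forallP arc1 /forallP arc2] i].
  by split; apply/forallP => i; have := arc i;
    rewrite PoszM zchinese_remainder // => /andP[].
by rewrite PoszM zchinese_remainder // arc1 arc2.
Qed.
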